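(* Let $\mathcal F$ be a linear subspace of $C(\mathbf X)$ equipped with a norm $\|\cdot\|_{\mathcal F}$ making it a Banach space, and suppose $$L:=\limsup_{\epsilon\to0}\frac{\mathcal H_\epsilon(U_{\mathcal F})}{\log(1/\epsilon)}\in(0,\infty).$$ There exists a strategy for Predictor such that for every $F\in\mathcal F$ there is $N_0$ (depending on $F$ but not on Reality's moves) such that for all $N\ge N_0$ and all moves of Reality $$\sum_{n=1}^N(y_n-\mu_n)^2\le\sum_{n=1}^N(y_n-F(x_n))^2+CL\log N,$$ where $C$ is a universal constant.
   Context: Protocol: $\mathbf X$ a nonempty topological space; at each round $n$ Reality announces $x_n\in\mathbf X$, Predictor announces $\mu_n\in\mathbb R$, Reality announces $y_n\in[-1,1]$; a strategy for Predictor maps each history $(x_1,y_1,\dots,x_{n-1},y_{n-1},x_n)$ to $\mu_n$. $C(\mathbf X)$: bounded continuous real functions on $\mathbf X$ with supremum norm. $U_{\mathcal F}=\{F\in\mathcal F:\|F\|_{\mathcal F}\le1\}$. $\mathcal H_\epsilon(A)$: $\log_2$ of the minimal number of points of $A$ forming an $\epsilon$-net for $A$ in the supremum metric of $C(\mathbf X)$. $\log=\log_2$. *)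

(* with R := Stdlib's reals (a realType via Rstruct),
   so that the constant C is universal (does not depend on a choice of real field). *)
From HB Require Import structures.
From mathcomp Require Import all_boot all_order all_algebra.
From mathcomp Require Import all_classical all_reals all_analysis.
From mathcomp Require Import Rstruct Rstruct_topology.
Set Implicit Arguments. Unset Strict Implicit. Unset Printing Implicit Defensive.
Import Order.TTheory GRing.Theory Num.Theory.
Import numFieldNormedType.Exports.
Local Open Scope classical_set_scope.
Local Open Scope ring_scope.

Notation R := Rdefinitions.R.

Definition log2 (x : R) : R := ln x / ln 2.

Section Defs.
Variable X : topologicalType.

(* C(X): bounded continuous real functions on X *)
Definition bounded_continuous (f : X -> R) : Prop :=
  continuous f /\ exists M : R, forall x, `|f x| <= M.

Definition banach_subspace (F : set (X -> R)) (nF : (X -> R) -> R) : Prop :=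
  [/\ (forall f, F f -> bounded_continuous f),
      F (fun _ => 0) /\
      (forall f g, F f -> F g -> F (fun x => f x + g x)) /\
      (forall (a : R) f, F f -> F (fun x => a * f x)),
      (forall f, F f -> nF f = 0 -> f = (fun _ => 0)) /\
      (forall (a : R) f, F f -> nF (fun x => a * f x) = `|a| * nF f) /\
      (forall f g, F f -> F g -> nF (fun x => f x + g x) <= nF f + nF g) &
      forall u : nat -> X -> R, (forall n, F (u n)) ->
        (forall e : R, 0 < e -> exists N : nat, forall m n : nat,
           (N <= m)%N -> (N <= n)%N -> nF (fun x => u m x - u n x) < e) ->
        exists f, F f /\ forall e : R, 0 < e -> exists N : nat, forall n : nat,
           (N <= n)%N -> nF (fun x => u n x - f x) < e].

Definition unit_ball (F : set (X -> R)) (nF : (X -> R) -> R) : set (X -> R) :=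
  [set f | F f /\ nF f <= 1].

Definition is_net (A : set (X -> R)) (eps : R) (s : seq (X -> R)) : Prop :=
  (forall g, g \in s -> A g) /\
  forall f, A f -> exists2 g, g \in s & forall x, `|f x - g x| <= eps.

(* minimal number of points of A forming an eps-net of A (+oo if none finite) *)
Definition covnum (A : set (X -> R)) (eps : R) : \bar R :=
  ereal_inf [set (n%:R)%:E | n in [set n : nat | exists s, size s = n /\ is_net A eps s]].

Definition entropy (A : set (X -> R)) (eps : R) : \bar R :=
  match covnum A eps with
  | EFin n => (log2 n)%:E
  | +oo%E => +oo%E
  | -oo%E => -oo%E
  end.

Definition entropy_exponent (F : set (X -> R)) (nF : (X -> R) -> R) : \bar R :=
  limf_esup (fun eps : R => (entropy (unit_ball F nF) eps * (log2 (1 / eps))^-1%:E)%E)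
            (0 : R)^'+.

(* Predictor's forecast at round n+1 (0-indexed n), given the history of the
   first n rounds and the current object xs n *)
Definition forecast (strat : seq (X * R) -> X -> R) (xs : nat -> X) (ys : nat -> R)
  (n : nat) : R := strat [seq (xs i, ys i) | i <- iota 0 n] (xs n).

End Defs.

From HB Require Import structures.
From mathcomp Require Import all_boot all_order all_algebra.
From mathcomp Require Import all_classical all_reals all_analysis.
From mathcomp Require Import Rstruct Rstruct_topology.
From mathcomp Require Import ring lra zify.
Import Order.TTheory GRing.Theory Num.Theory.
Import numFieldNormedType.Exports.
Local Open Scope classical_set_scope.
Local Open Scope ring_scope.
Set Implicit Arguments. Unset Strict Implicit. Unset Printing Implicit Defensive.

(* Predictor runs Vovk's aggregating algorithm for the squared loss, with learning rate
   1/32 (for which the loss is mixable on [-1, 1]), over a countable pool of "sleeping"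
   experts.  Level m consists of the clipped functions 2^m g, g ranging over a 4^-m-net of
   the unit ball U_F with about 2^(4 L m) elements; it wakes up around round L m and has
   prior mass about e^(-L m) shared among its members.  The potential
   sum prior * exp (- eta * excess loss) never increases, so the aggregate loses at most
   -ln(prior)/eta = O(L m) against any expert, plus a bounded amount per round in which
   that expert slept.  Given f in F and N rounds, take m ~ log2 N: f / 2^m lies in U_F, so
   some expert of level m is uniformly 2^-m close to f, which costs at most
   4 N 2^-m <= 4 over the N rounds; every other term is O(L log N). *)

Definition clip (a : R) : R := if a < -1 then -1 else if 1 < a then 1 else a.

Lemma clip_itv a : -1 <= clip a <= 1.
Proof. by rewrite /clip; case: (ltP a (-1)) => ?; case: (ltP 1 a) => ? /=; lra. Qed.

Lemma clip_lipschitz a b : `|clip a - clip b| <= `|a - b|.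
Proof.
have [h|h] := lerP 0 (clip a - clip b); rewrite ?(ger0_norm h) ?(ltr0_norm h);
have [h'|h'] := lerP 0 (a - b); rewrite ?(ger0_norm h') ?(ltr0_norm h');
move: h; rewrite /clip; case: (ltP a (-1)) => ?; case: (ltP 1 a) => ?;
  case: (ltP b (-1)) => ?; case: (ltP 1 b) => ? ?; lra.
Qed.

Lemma clip_sq_loss y a : -1 <= y <= 1 -> (y - clip a) ^+ 2 <= (y - a) ^+ 2.
Proof. by rewrite /clip; case: (ltP a (-1)) => ?; case: (ltP 1 a) => ? ?; nra. Qed.

Lemma sq_loss_clip_lipschitz y a b : -1 <= y <= 1 ->
  (y - clip a) ^+ 2 <= (y - clip b) ^+ 2 + 4%:R * `|a - b|.
Proof.
move=> /andP[y1 y2]; have := clip_lipschitz a b.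
have /andP[a1 a2] := clip_itv a; have /andP[b1 b2] := clip_itv b.
have [h|h] := lerP 0 (clip a - clip b); rewrite ?(ger0_norm h) ?(ltr0_norm h); nra.
Qed.

Lemma sum_sq_loss_clip (T : Type) (xs : nat -> T) (ys : nat -> R) (h f : T -> R) (d : R) N :
  (forall n, -1 <= ys n <= 1) -> (forall x, `|h x - f x| <= d) ->
  \sum_(0 <= n < N) (ys n - clip (h (xs n))) ^+ 2
    <= \sum_(0 <= n < N) (ys n - f (xs n)) ^+ 2 + 4%:R * d * N%:R.
Proof.
move=> ys_itv hf; rewrite mulr_natr -[N in _ *+ N]subn0 -sumr_const_nat -big_split /=.
apply: ler_sum => n _.
apply: le_trans (sq_loss_clip_lipschitz (h (xs n)) (f (xs n)) (ys_itv n)) _.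
by rewrite lerD ?clip_sq_loss // ler_pM2l ?ltr0n.
Qed.

Lemma expR_le_invB (z : R) : z < 1 -> expR z <= (1 - z)^-1.
Proof.
move=> hz; rewrite -[expR z]invrK lef_pV2 ?posrE ?invr_gt0 ?expR_gt0 ?subr_gt0 //.
by rewrite -expRN; have := expR_ge1Dx (- z); lra.
Qed.

Definition eta : R := 32%:R^-1.

(* Tangent-line bound for [v |-> exp (- eta v^2)] at [u]: the constant [eta = 1/32]
   is small enough for it to hold on [[-2, 2]]. *)
Lemma expR_sq_tangent (u v : R) : -2 <= u <= 2 -> -2 <= v <= 2 ->
  expR (- eta * v ^+ 2) <= expR (- eta * u ^+ 2) * (1 + u * (u - v) / 16%:R).
Proof.
move=> hu hv.
have -> : - eta * v ^+ 2 = - eta * u ^+ 2 + (u ^+ 2 - v ^+ 2) / 32%:R by rewrite /eta; field.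
rewrite exp.expRD ler_pM2l ?expR_gt0 //.
set z := (u ^+ 2 - v ^+ 2) / 32%:R.
have hz : z < 1 by rewrite /z; nra.
apply: le_trans (expR_le_invB hz) _.
have hp : 0 < 1 - z by lra.
rewrite -(ler_pM2l hp) mulfV ?gt_eqF //.
have -> : (1 - z) * (1 + u * (u - v) / 16%:R)
    = 1 + (u - v) ^+ 2 * (1 / 32%:R - u * (u + v) / 512%:R) by rewrite /z; field.
rewrite lerDl mulr_ge0 ?sqr_ge0 //; nra.
Qed.

Section WeightedMean.
Variables (T : Type) (r : seq T) (w P : T -> R).
Hypotheses (w_ge0 : forall t, 0 <= w t) (P_itv : forall t, -1 <= P t <= 1).

Let S := \sum_(t <- r) w t.
Let A := \sum_(t <- r) w t * P t.

Lemma wsum_itv : - S <= A <= S.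
Proof.
apply/andP; split; last by apply: ler_sum => t _; have := w_ge0 t; have := P_itv t; nra.
by rewrite -sumrN; apply: ler_sum => t _; have := w_ge0 t; have := P_itv t; nra.
Qed.

Lemma wmean_itv : -1 <= A / S <= 1.
Proof.
have /andP[h1 h2] := wsum_itv.
have [S0|S0] := eqVneq S 0; first by rewrite S0 invr0 mulr0; lra.
have Sp : 0 < S by rewrite lt_neqAle eq_sym S0 sumr_ge0.
by rewrite ler_pdivlMr // ler_pdivrMr //; lra.
Qed.

Lemma sq_loss_mixable (y : R) : -1 <= y <= 1 ->
  \sum_(t <- r) w t * expR (- eta * (y - P t) ^+ 2)
    <= expR (- eta * (y - A / S) ^+ 2) * S.
Proof.
move=> hy; have /andP[h1 h2] := wsum_itv; have hmean := wmean_itv.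
set mu := A / S in hmean *; set e := expR (- eta * (y - mu) ^+ 2).
have AmS : A - mu * S = 0.
  have [S0|S0] := eqVneq S 0; last by rewrite /mu divfK // subrr.
  by rewrite /mu S0 invr0 !mulr0 subr0; lra.
apply: (@le_trans _ _ (\sum_(t <- r) (e * w t + e * (y - mu) / 16%:R * (w t * P t - mu * w t)))).
  apply: ler_sum => t _.
  have -> : e * w t + e * (y - mu) / 16%:R * (w t * P t - mu * w t)
      = w t * (e * (1 + (y - mu) * ((y - mu) - (y - P t)) / 16%:R)) by ring.
  rewrite ler_wpM2l //; apply: expR_sq_tangent.
    by move: hmean hy => /andP[? ?] /andP[? ?]; apply/andP; split; lra.
  by move: (P_itv t) hy => /andP[? ?] /andP[? ?]; apply/andP; split; lra.
by rewrite big_split /= -!mulr_sumr sumrB -!mulr_sumr -/S -/A AmS mulr0 addr0 mulrC.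
Qed.

End WeightedMean.

(* Experts are indexed by pairs [(m, i)] with [i < pool_size m]; at round [t] only the
   levels [m < awake t] take part, and an expert that is asleep is charged the loss of
   the aggregate itself. *)
Record pool (X : Type) := Pool {
  pool_size : nat -> nat;
  awake : nat -> nat;
  expert : nat -> nat -> X -> R;
  prior : nat -> nat -> R }.

Section Aggregation.
Variables (X : Type) (a : pool X).

Definition experts_below (G : nat) : seq (nat * nat) :=
  [seq (m, i) | m <- iota 0 G, i <- iota 0 (pool_size a m)].

Definition excess_loss (xs : nat -> X) (ys mus : nat -> R) (p : nat * nat) (t : nat) : R :=
  \sum_(0 <= s < t) (if (p.1 < awake a s)%N then
       (ys s - expert a p.1 p.2 (xs s)) ^+ 2 - (ys s - mus s) ^+ 2 else 0).

Definition weight xs ys mus p t : R :=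
  prior a p.1 p.2 * expR (- eta * excess_loss xs ys mus p t).

Definition aggregate xs ys mus t : R :=
  (\sum_(p <- experts_below (awake a t)) weight xs ys mus p t * expert a p.1 p.2 (xs t))
  / (\sum_(p <- experts_below (awake a t)) weight xs ys mus p t).

Fixpoint forecasts xs ys (n : nat) : seq R :=
  if n is n'.+1 then rcons (forecasts xs ys n') (aggregate xs ys (nth 0 (forecasts xs ys n')) n')
  else [::].

Definition predict xs ys n : R := aggregate xs ys (nth 0 (forecasts xs ys n)) n.

Lemma size_forecasts xs ys n : size (forecasts xs ys n) = n.
Proof. by elim: n => //= n IH; rewrite size_rcons IH. Qed.

Lemma nth_forecasts xs ys n s : (s < n)%N -> nth 0 (forecasts xs ys n) s = predict xs ys s.
Proof.
elim: n => // n IH hs /=; rewrite nth_rcons size_forecasts.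
case: ltngtP => [/IH //|hns|-> //].
by move: hs; rewrite ltnS leqNgt hns.
Qed.

Lemma aggregate_ext xs xs' ys ys' mus mus' t :
  (forall s, (s <= t)%N -> xs s = xs' s) -> (forall s, (s < t)%N -> ys s = ys' s) ->
  (forall s, (s < t)%N -> mus s = mus' s) ->
  aggregate xs ys mus t = aggregate xs' ys' mus' t.
Proof.
move=> hx hy hmu.
have hw p : weight xs ys mus p t = weight xs' ys' mus' p t.
  congr (_ * expR (_ * _)); apply: eq_big_nat => s /andP[_ hs].
  by rewrite hx ?hy ?hmu // ltnW.
by congr (_ / _); apply: eq_bigr => p _; rewrite hw ?hx.
Qed.

Lemma predictE xs ys t : predict xs ys t = aggregate xs ys (predict xs ys) t.
Proof. by apply: aggregate_ext => // s hs; rewrite nth_forecasts. Qed.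

Lemma forecasts_ext xs xs' ys ys' n :
  (forall s, (s < n)%N -> xs s = xs' s) -> (forall s, (s < n)%N -> ys s = ys' s) ->
  forecasts xs ys n = forecasts xs' ys' n.
Proof.
elim: n => //= n IH hx hy.
have hx' s : (s < n)%N -> xs s = xs' s by move=> hs; rewrite hx // ltnW.
have hy' s : (s < n)%N -> ys s = ys' s by move=> hs; rewrite hy // ltnW.
by rewrite (IH hx' hy'); congr rcons; apply: aggregate_ext => // s hs; rewrite hx.
Qed.

Lemma predict_ext xs xs' ys ys' n :
  (forall s, (s <= n)%N -> xs s = xs' s) -> (forall s, (s < n)%N -> ys s = ys' s) ->
  predict xs ys n = predict xs' ys' n.
Proof.
move=> hx hy; rewrite /predict (@forecasts_ext _ xs' _ ys') => [|s hs|//].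
  exact: aggregate_ext.
by rewrite hx // ltnW.
Qed.

End Aggregation.

Lemma big_experts_below_restrict (X : Type) (a : pool X) (k G : nat) (F : nat * nat -> R) :
  (k <= G)%N ->
  \sum_(p <- experts_below a G | (p.1 < k)%N) F p = \sum_(p <- experts_below a k) F p.
Proof.
move=> kG; rewrite big_mkcond /experts_below !big_allpairs_dep /=.
rewrite -(subnKC kG) iotaD big_cat /= add0n [X in _ + X]big1_seq ?addr0 => [|m].
  rewrite big_seq [RHS]big_seq; apply: eq_bigr => m; rewrite mem_iota add0n => /andP[_ mk].
  by apply: eq_bigr => i _; rewrite mk.
by rewrite mem_iota => /and3P[_ km _]; apply: big1 => i _; rewrite ltnNge km.
Qed.

Section Potential.
Variables (X : Type) (a : pool X) (xs : nat -> X) (ys : nat -> R).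
Hypotheses (prior_ge0 : forall m i, 0 <= prior a m i)
  (expert_itv : forall m i x, -1 <= expert a m i x <= 1)
  (prior_sum_le1 : forall G, \sum_(p <- experts_below a G) prior a p.1 p.2 <= 1)
  (awake_homo : {homo awake a : s t / (s <= t)%N})
  (ys_itv : forall t, -1 <= ys t <= 1).

Let mu := predict a xs ys.

Lemma weight_ge0 p t : 0 <= weight a xs ys mu p t.
Proof. by rewrite mulr_ge0 ?expR_ge0. Qed.

Lemma predict_itv t : -1 <= mu t <= 1.
Proof. by rewrite /mu predictE; apply: wmean_itv => [p|p]; rewrite ?weight_ge0. Qed.

Definition potential (G n : nat) : R :=
  \sum_(p <- experts_below a G) weight a xs ys mu p n.

(* The aggregate is the weighted mean of the awake experts, so mixability pays for the
   awake ones while the asleep ones keep their weight. *)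
Lemma potential_step G n : (awake a n <= G)%N -> potential G n.+1 <= potential G n.
Proof.
move=> nG; set loss_mu := (ys n - mu n) ^+ 2.
pose loss (p : nat * nat) := (ys n - expert a p.1 p.2 (xs n)) ^+ 2.
pose w p := weight a xs ys mu p n.
have -> : potential G n.+1 = \sum_(p <- experts_below a G)
    (if (p.1 < awake a n)%N then w p * expR (- eta * loss p) * expR (eta * loss_mu) else w p).
  apply: eq_bigr => p _; rewrite /w /weight /excess_loss big_nat_recr //=.
  case: ifP => _; last by rewrite addr0.
  by rewrite -!mulrA -!exp.expRD /loss /loss_mu; congr (_ * expR _); ring.
rewrite /potential [X in X <= _](bigID (fun p => (p.1 < awake a n)%N)) /=.
rewrite [X in _ <= X](bigID (fun p => (p.1 < awake a n)%N)) /=.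
apply: lerD; last by apply: ler_sum => p /negbTE ->.
rewrite (eq_bigr (fun p => w p * expR (- eta * loss p) * expR (eta * loss_mu))) => [|p -> //].
rewrite !big_experts_below_restrict // -mulr_suml.
have := sq_loss_mixable (experts_below a (awake a n))
  (P := fun p => expert a p.1 p.2 (xs n)) (fun p => weight_ge0 p n)
  (fun p => expert_itv _ _ _) (ys_itv n).
rewrite -/(aggregate a xs ys mu n) /mu -predictE -/mu => hmix.
apply: le_trans (ler_wpM2r (expR_ge0 _) hmix) _.
by rewrite mulrAC -exp.expRD /loss_mu mulNr addNr exp.expR0 mul1r.
Qed.

Lemma potential_le1 G N : (awake a N <= G)%N -> potential G N <= 1.
Proof.
elim: N => [|n IH] nG.
  rewrite /potential (eq_bigr (fun p => prior a p.1 p.2)) => [|p _].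
    exact: prior_sum_le1.
  by rewrite /weight /excess_loss big_geq // mulr0 exp.expR0 mulr1.
apply: le_trans (potential_step _) (IH _); apply: leq_trans nG; exact: awake_homo.
Qed.

Lemma excess_loss_ge G N m i : (awake a N <= G)%N -> (m < G)%N -> (i < pool_size a m)%N ->
  0 < prior a m i -> ln (prior a m i) / eta <= excess_loss a xs ys mu (m, i) N.
Proof.
move=> NG mG im pos.
have hin : (m, i) \in experts_below a G.
  by apply/allpairsPdep; exists m, i; rewrite !mem_iota.
have hw : weight a xs ys mu (m, i) N <= 1.
  apply: le_trans (potential_le1 NG); rewrite /potential (big_rem _ hin) /= lerDl.
  by apply: sumr_ge0 => p _; apply: weight_ge0.
have eta_gt0 : 0 < eta by rewrite invr_gt0 ltr0n.
set E := excess_loss _ _ _ _ _ _ in hw *.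
have : - eta * E <= - ln (prior a m i).
  rewrite -lnV ?posrE // -[X in X <= _]expRK ler_ln ?posrE ?expR_gt0 ?invr_gt0 //.
  by rewrite -(ler_pM2l pos) mulfV ?gt_eqF.
by rewrite ler_pdivrMr // mulrC; lra.
Qed.

(* Each round contributes to [excess_loss] exactly the loss difference with the expert,
   except the asleep rounds, where the loss difference is at most 4. *)
Lemma aggregate_regret G N m i : (awake a N <= G)%N -> (m < G)%N ->
  (i < pool_size a m)%N -> 0 < prior a m i ->
  \sum_(0 <= t < N) (ys t - mu t) ^+ 2 <=
  \sum_(0 <= t < N) (ys t - expert a m i (xs t)) ^+ 2
  + 4%:R * \sum_(0 <= t < N) (if (m < awake a t)%N then 0 else 1)
  - ln (prior a m i) / eta.
Proof.
move=> NG mG im pos; have := excess_loss_ge NG mG im pos.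
rewrite {1}/excess_loss /= => hex.
apply: le_trans (_ : \sum_(0 <= t < N) ((ys t - expert a m i (xs t)) ^+ 2
   + 4%:R * (if (m < awake a t)%N then 0 else 1)
   - (if (m < awake a t)%N then (ys t - expert a m i (xs t)) ^+ 2 - (ys t - mu t) ^+ 2
      else 0)) <= _); last by rewrite sumrB big_split /= -mulr_sumr; lra.
apply: ler_sum => t _; case: ifP => _; first lra.
have := predict_itv t; have := ys_itv t; have := sqr_ge0 (ys t - expert a m i (xs t)).
by move=> ? /andP[? ?] /andP[? ?]; nra.
Qed.

End Potential.

Lemma eventually_lt_linear (K c : R) : 0 < c ->
  exists M : nat, forall t : nat, (M <= t)%N -> K < c * t%:R.
Proof.
move=> c_gt0; exists (Num.truncn (K / c)).+1 => t Mt.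
rewrite mulrC -ltr_pdivrMr //; apply: lt_le_trans (truncnS_gt _) _.
by rewrite ler_nat.
Qed.

Lemma count_lt_le (x : R) N : 0 <= x ->
  \sum_(0 <= t < N) (if t%:R < x then 1 else 0 : R) <= x + 1.
Proof.
move=> x0; elim: N => [|n IH]; first by rewrite big_geq //; lra.
rewrite big_nat_recr //=; case: ifPn => [nx|_]; last by rewrite addr0.
have : \sum_(0 <= t < n) (if t%:R < x then 1 else 0 : R) <= n%:R.
  by rewrite -[n in n%:R]subn0 -sumr_const_nat; apply: ler_sum => t _; case: ifP.
lra.
Qed.

Lemma limf_esup_right0_lt (f : R -> \bar R) (c : \bar R) : (limf_esup f 0^'+ < c)%E ->
  exists2 e : R, 0 < e & forall x, 0 < x < e -> (f x < c)%E.
Proof.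
case/ereal_inf_lt => _ [V /nbhs_norm0P[e /= e_gt0 eV] <-] Vc.
exists e => // x /andP[x_gt0 xe]; apply: le_lt_trans Vc.
by apply: ereal_sup_ubound; exists x => //; apply: eV; rewrite // /= gtr0_norm.
Qed.

Lemma ln2_gt0 : 0 < ln (2%:R : R).
Proof. by rewrite ln_gt0 // ltr1n. Qed.

Lemma ln_size_net_lt (X : topologicalType) (A : set (X -> R)) (eps c : R) : 0 <= c ->
  (entropy A eps < c%:E)%E -> exists s, is_net A eps s /\ ln (size s)%:R <= c * ln 2.
Proof.
move=> c_ge0.
have cov_ge0 : (0 <= covnum A eps)%E.
  by apply: le_ereal_inf_tmp => _ [n _ <-]; rewrite lee_fin.
rewrite /entropy; case covE: (covnum A eps) cov_ge0 => [n| |] //.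
rewrite lee_fin lte_fin => n_ge0; rewrite /log2 ltr_pdivrMr ?ln2_gt0 // => lnc.
have : (covnum A eps < (expR (c * ln 2))%:E)%E.
  rewrite covE lte_fin; have [->|n_gt0] := eqVneq n 0; first exact: expR_gt0.
  have n_pos : 0 < n by rewrite lt_neqAle eq_sym n_gt0.
  by rewrite -(lnK (x := n)) ?posrE // ltr_expR.
case/ereal_inf_lt => _ [_ [s [<- net_s] <-]]; rewrite lte_fin => s_lt.
exists s; split => //; have [->|s_gt0] := eqVneq (size s) 0%N.
  by rewrite ln0 // mulr_ge0 // ltW ?ln2_gt0.
by rewrite ltW // -ltr_expR lnK // posrE ltr0n lt0n.
Qed.

Definition dyadic (k : nat) : R := (2%:R ^+ k)^-1.

Lemma dyadic_gt0 k : 0 < dyadic k.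
Proof. by rewrite invr_gt0 exprn_gt0. Qed.

Lemma log2_inv_dyadic k : log2 (1 / dyadic k) = k%:R.
Proof.
by rewrite /log2 /dyadic div1r invrK lnXn // mulrnAl mulfV // gt_eqF // ln2_gt0.
Qed.

Definition small_net (X : topologicalType) (F : set (X -> R)) (nF : (X -> R) -> R)
    (L : R) (k : nat) (s : seq (X -> R)) : Prop :=
  is_net (unit_ball F nF) (dyadic k) s /\ ln (size s)%:R <= 2 * L * k%:R * ln 2.

Lemma small_nets_exist (X : topologicalType) (F : set (X -> R)) (nF : (X -> R) -> R) (L : R) :
  0 < L -> (entropy_exponent F nF < (2 * L)%:E)%E ->
  exists k0, forall k, (k0 <= k)%N -> exists s, small_net F nF L k s.
Proof.
move=> L_gt0 /limf_esup_right0_lt[e e_gt0 He].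
have [k0 k0P] := eventually_lt_linear 1 e_gt0.
exists k0 => k k0k; apply: ln_size_net_lt; first by rewrite !mulr_ge0 // ltW.
have k_gt0 : (0 < k)%N by rewrite lt0n; apply: contraTneq (k0P _ k0k) => ->; lra.
have := He (dyadic k); rewrite log2_inv_dyadic lte_pdivrMr ?ltr0n // -EFinM; apply.
rewrite dyadic_gt0 /= /dyadic -[_^-1]mul1r ltr_pdivrMr ?exprn_gt0 //.
apply: lt_le_trans (k0P _ k0k) _; rewrite ler_wpM2l ?(ltW e_gt0) //.
by rewrite -natrX ler_nat ltnW // ltn_expl.
Qed.

Section EntropyPool.
Variables (X : topologicalType) (F : set (X -> R)) (nF : (X -> R) -> R) (L : R).

Definition level_net (m : nat) : seq (X -> R) :=
  if pselect (exists s, small_net F nF L (2 * m) s) is left h then sval (cid h) else [::].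

Lemma level_netP m :
  (exists s, small_net F nF L (2 * m) s) -> small_net F nF L (2 * m) (level_net m).
Proof. by rewrite /level_net; case: pselect => // h _; apply: svalP. Qed.

Let q := expR (- L).

Definition entropy_pool : pool X := {|
  pool_size m := size (level_net m);
  awake t := Num.truncn (t%:R / L);
  expert m i x := clip (2%:R ^+ m * nth (fun _ => 0) (level_net m) i x);
  prior m i := (1 - q) * q ^+ m / (size (level_net m))%:R |}.

Hypothesis L_gt0 : 0 < L.

Lemma q_itv : 0 < q < 1.
Proof. by rewrite expR_gt0 /q -exp.expR0 ltr_expR oppr_lt0. Qed.

Lemma entropy_pool_prior_ge0 m i : 0 <= prior entropy_pool m i.
Proof.
have /andP[q0 q1] := q_itv.
by rewrite /= divr_ge0 // mulr_ge0 ?exprn_ge0 ?subr_ge0 ?(ltW q0) ?(ltW q1).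
Qed.

Lemma entropy_pool_prior_sum G :
  \sum_(p <- experts_below entropy_pool G) prior entropy_pool p.1 p.2 <= 1.
Proof.
have /andP[q0 q1] := q_itv.
rewrite /experts_below big_allpairs_dep /=.
apply: (@le_trans _ _ (\sum_(0 <= m < G) (1 - q) * q ^+ m)).
  rewrite /index_iota subn0; apply: ler_sum => m _.
  rewrite -{1}(subn0 (size _)) -/(index_iota 0 _) sumr_const_nat subn0.
  have [->|sz_gt0] := posnP (size (level_net m)).
    by rewrite mulr0n mulr_ge0 ?exprn_ge0 ?subr_ge0 ?(ltW q0) ?(ltW q1).
  by rewrite -[_ *+ _]mulr_natr divfK // pnatr_eq0 -lt0n sz_gt0.
rewrite -mulr_sumr big_mkord; have := subrX1 q G; have := exprn_ge0 G (ltW q0); nra.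
Qed.

Lemma entropy_pool_awake_homo : {homo awake entropy_pool : s t / (s <= t)%N}.
Proof. by move=> s t st; apply: le_truncn; rewrite ler_pM2r ?invr_gt0 // ler_nat. Qed.

Lemma entropy_pool_asleep_rounds m N :
  \sum_(0 <= n < N) (if (m < awake entropy_pool n)%N then 0 else 1 : R) <= L * m%:R + L + 1.
Proof.
have Lm_ge0 : 0 <= L * m.+1%:R by rewrite mulr_ge0 ?(ltW L_gt0).
apply: (@le_trans _ _ (L * m.+1%:R + 1)); last by rewrite -natr1; lra.
apply: le_trans (count_lt_le N Lm_ge0).
apply: ler_sum => n _; case: ifPn => [_|]; first by case: ifP.
by rewrite -leqNgt /= truncn_le_nat ltr_pdivrMr // mulrC => ->.
Qed.

Lemma entropy_pool_ln_prior m i : small_net F nF L (2 * m) (level_net m) ->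
  (i < size (level_net m))%N ->
  - ln (prior entropy_pool m i) / eta <= 32%:R * (5%:R * L * m%:R - ln (1 - q)).
Proof.
move=> [_ small] im; have /andP[q0 q1] := q_itv.
have ln2_le1 : ln (2%:R : R) <= 1.
  rewrite -[X in _ <= X](expRK 1) ler_ln ?posrE ?expR_gt0 //.
  by have := expR_ge1Dx (1 : R); rewrite -natr1 addrC.
have sz_gt0 : 0 < (size (level_net m))%:R :> R by rewrite ltr0n; apply: leq_ltn_trans im.
rewrite /= lnM ?posrE ?mulr_gt0 ?exprn_gt0 ?invr_gt0 ?subr_gt0 // lnV ?posrE //.
rewrite lnM ?posrE ?exprn_gt0 ?subr_gt0 // lnXn // /q expRK /eta invrK.
rewrite mulNrn -[L *+ m]mulr_natr ?mul1r.
move: small; rewrite natrM; have : 0 <= L * m%:R by rewrite mulr_ge0 ?(ltW L_gt0).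
nra.
Qed.

Hypotheses (F_scale : forall (a : R) f, F f -> F (fun x => a * f x))
  (nF_scale : forall (a : R) f, F f -> nF (fun x => a * f x) = `|a| * nF f).

Lemma level_net_approx f m : F f -> nF f <= 2%:R ^+ m ->
  small_net F nF L (2 * m) (level_net m) ->
  exists2 i, (i < size (level_net m))%N &
    forall x, `|2%:R ^+ m * nth (fun _ => 0) (level_net m) i x - f x| <= (2%:R ^+ m)^-1.
Proof.
move=> Ff nFf [[_ net] _]; have p2m : 0 < (2%:R : R) ^+ m by rewrite exprn_gt0.
have [|g gs gf] := net (fun x => (2%:R ^+ m)^-1 * f x).
  split; first exact: F_scale.
  by rewrite nF_scale // ger0_norm ?invr_ge0 ?(ltW p2m) // ler_pdivrMl // mulr1.
exists (index g (level_net m)); first by rewrite index_mem.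
move=> x; rewrite nth_index //.
have -> : 2%:R ^+ m * g x - f x = 2%:R ^+ m * - ((2%:R ^+ m)^-1 * f x - g x).
  by field; rewrite gt_eqF.
rewrite normrM normrN ger0_norm ?(ltW p2m) //.
apply: le_trans (ler_wpM2l (ltW p2m) (gf x)) _.
by rewrite /dyadic mulnC exprM expr2 invfM mulrA divff ?mul1r // gt_eqF.
Qed.

Lemma entropy_pool_regret f m xs ys N : F f -> nF f <= 2%:R ^+ m -> (N <= 2 ^ m)%N ->
  (exists s, small_net F nF L (2 * m) s) -> (forall n, -1 <= ys n <= 1) ->
  \sum_(0 <= n < N) (ys n - predict entropy_pool xs ys n) ^+ 2
    <= \sum_(0 <= n < N) (ys n - f (xs n)) ^+ 2
       + 164%:R * L * m%:R + 4%:R * L + 8%:R - 32%:R * ln (1 - q).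
Proof.
move=> Ff nFf Nm /level_netP net ys_itv.
have [i im fi] := level_net_approx Ff nFf net.
have prior_gt0 : 0 < prior entropy_pool m i.
  have /andP[q0 q1] := q_itv.
  by rewrite /= !mulr_gt0 ?exprn_gt0 ?invr_gt0 ?subr_gt0 // ltr0n; apply: leq_ltn_trans im.
have := aggregate_regret xs entropy_pool_prior_ge0 (fun _ _ _ => clip_itv _)
  entropy_pool_prior_sum entropy_pool_awake_homo ys_itv
  (leq_maxl (awake entropy_pool N) m.+1)
  (leq_maxr _ _ : (m < maxn _ m.+1)%N) im prior_gt0.
have := entropy_pool_ln_prior net im; have := entropy_pool_asleep_rounds m N.
have := sum_sq_loss_clip xs N ys_itv fi.
have : (2%:R ^+ m)^-1 * N%:R <= 1 :> R.
  by rewrite ler_pdivrMl ?exprn_gt0 // mulr1 -natrX ler_nat.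
rewrite /=; lra.
Qed.

End EntropyPool.

Definition pool_strategy (X : Type) (a : pool X) (h : seq (X * R)) (x : X) : R :=
  predict a (fun i => (nth (x, 0) (rcons h (x, 0)) i).1) (fun i => (nth (x, 0) h i).2) (size h).

Lemma forecast_pool_strategy (X : topologicalType) (a : pool X) xs ys n :
  forecast (pool_strategy a) xs ys n = predict a xs ys n.
Proof.
rewrite /forecast /pool_strategy size_map size_iota; apply: predict_ext => s sn.
  rewrite nth_rcons size_map size_iota; case: ltngtP sn => // [sn _|-> //].
  by rewrite (nth_map 0) ?size_iota // nth_iota.
by rewrite (nth_map 0) ?size_iota // nth_iota.
Qed.

Lemma trunc_log2_le_log2 N : (0 < N)%N -> (trunc_log 2 N)%:R <= log2 N%:R.
Proof.
move=> N_gt0; rewrite /log2 ler_pdivlMr ?ln2_gt0 // mulr_natl -lnXn //.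
rewrite ler_ln ?posrE ?exprn_gt0 ?ltr0n //.
by rewrite -natrX ler_nat trunc_logP.
Qed.

Theorem corollary2 :
  exists C : R,
  forall (X : topologicalType) (F : set (X -> R)) (nF : (X -> R) -> R),
    [set: X] !=set0 ->
    banach_subspace F nF ->
    (0 < entropy_exponent F nF < +oo)%E ->
    exists strat : seq (X * R) -> X -> R,
      forall f, F f ->
        exists N0 : nat, forall N : nat, (N0 <= N)%N ->
          forall (xs : nat -> X) (ys : nat -> R),
            (forall n, -1 <= ys n <= 1) ->
            \sum_(0 <= n < N) (ys n - forecast strat xs ys n) ^+ 2
              <= \sum_(0 <= n < N) (ys n - f (xs n)) ^+ 2
                 + C * fine (entropy_exponent F nF) * log2 N%:R.
Proof.
exists 300%:R => X F nF _ [_ [_ [_ F_scale]] [_ [nF_scale _]] _] hL.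
have [L EL L_gt0] : exists2 L, entropy_exponent F nF = L%:E & 0 < L.
  by move: hL; case: entropy_exponent => [l /andP[l_gt0 _]||]; rewrite ?ltxx ?andbF //; exists l.
have [k0 nets] : exists k0, forall k, (k0 <= k)%N -> exists s, small_net F nF L k s.
  by apply: small_nets_exist => //; rewrite EL lte_fin; lra.
rewrite EL /=; exists (pool_strategy (entropy_pool F nF L)) => f Ff.
have [M1 KM1] := eventually_lt_linear (168%:R * L + 8%:R - 32%:R * ln (1 - expR (- L)))
  (mulr_gt0 (ltr0n _ 136) L_gt0).
have [M2 fM2] := eventually_lt_linear (nF f) ltr01.
exists (2 ^ maxn k0 (maxn M1 M2))%N => N NM xs ys ys_itv.
have N_gt0 : (0 < N)%N by apply: leq_trans NM; rewrite expn_gt0.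
set t := trunc_log 2 N.
have /and3P[k0t M1t M2t] : [&& k0 <= t, M1 <= t & M2 <= t]%N.
  by rewrite -!geq_max; apply: trunc_log_max.
have f_le : nF f <= 2%:R ^+ t.+1.
  apply/ltW/(lt_le_trans (fM2 _ M2t)); rewrite mul1r -natrX ler_nat.
  exact: leq_trans (leqnSn t) (ltnW (ltn_expl _ _)).
under eq_bigr do rewrite forecast_pool_strategy.
apply: le_trans (entropy_pool_regret L_gt0 F_scale nF_scale xs Ff f_le
  (ltnW (trunc_log_ltn _ _)) (nets _ _) ys_itv) _ => //; first lia.
have := KM1 _ M1t; have : L * t%:R <= L * log2 N%:R by rewrite ler_pM2l ?trunc_log2_le_log2.
rewrite -natr1; lra.
Qed.
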